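(* Let $\kappa>0$, let $Z$ be a $\kappa$-self-similar Markov process with transition function $P$, and let $(G_{s,t})_{0<s\le t}$ be a family of probability distributions on $(0,1]$ with $G_{s,s}=\delta_1$ satisfying $\int\int h(ab)G_{s,t}(\mathrm{d}a)G_{t,u}(\mathrm{d}b)=\int h(r)G_{s,u}(\mathrm{d}r)$ for all bounded measurable $h$ and $0<s\le t\le u$. Let $\widetilde P(0,t,0,\mathrm{d}y)=P(0,t,0,\mathrm{d}y)$ and $\widetilde P(s,t,x,\mathrm{d}y)=\int P(rt,t,(t/s)^{\kappa}r^{\kappa}x,\mathrm{d}y)\,G_{s,t}(\mathrm{d}r)$ for $0<s\le t$. If $G_{s,t}$ depends on $(s,t)$ only through $t/s$, then \[ \widetilde P(cs,ct,c^\kappa x,c^\kappa\,\mathrm{d}y)=\widetilde P(s,t,x,\mathrm{d}y)\qquad\text{for all } c>0,\ s\le t,\ x. \]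
   Context: $Z=(Z_t)_{t\ge0}$ is a real-valued càdlàg Markov process which is $\kappa$-self-similar: $(Z_{ct})_{t\ge0}\stackrel{d}{=}(c^\kappa Z_t)_{t\ge0}$ (finite-dimensional distributions) for all $c>0$. Its transition function $P(s,t,x,\mathrm{d}y)=\mathbb{P}(Z_t\in\mathrm{d}y\mid Z_s=x)$ satisfies $P(cs,ct,c^\kappa x,c^\kappa\,\mathrm{d}y)=P(s,t,x,\mathrm{d}y)$ for all $c>0$. For a measure $M$ and $c>0$, $M(c\,\mathrm{d}y)$ is defined by $\int g(y)M(c\,\mathrm{d}y)=\int g(y/c)M(\mathrm{d}y)$. *)

From HB Require Import structures.
From mathcomp Require Import all_boot all_order all_algebra.
From mathcomp Require Import all_classical all_reals all_analysis.
From mathcomp Require Import measurable_realfun.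
Set Implicit Arguments. Unset Strict Implicit. Unset Printing Implicit Defensive.
Import Order.TTheory GRing.Theory Num.Theory.
Local Open Scope classical_set_scope.
Local Open Scope ring_scope.

(* The measure M(c dy) evaluated on A is M(c A), where c A = image of A by y |-> c y. *)
Definition scale_set (R : realType) (c : R) (A : set R) : set R :=
  (fun y => c * y) @` A.

Definition transition_function (R : realType)
    (P : R -> R -> R -> probability R R) : Prop :=
  [/\ (forall s t A, 0 <= s <= t -> measurable A ->
         measurable_fun [set: R] (fun x : R => P s t x A)),
      (forall s x A, 0 <= s -> measurable A -> P s s x A = \d_x A) &
      (forall s t u x A, 0 <= s <= t -> t <= u -> measurable A ->
         P s u x A = (\int[P s t x]_y P t u y A)%E)].

Definition ss_transition (R : realType) (kappa : R)
    (P : R -> R -> R -> probability R R) : Prop :=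
  forall c s t x A, 0 < c -> 0 <= s <= t -> measurable A ->
    P (c * s) (c * t) (c `^ kappa * x) (scale_set (c `^ kappa) A) = P s t x A.

Definition G_family (R : realType) (G : R -> R -> probability R R) : Prop :=
  [/\ (forall s t, 0 < s <= t -> G s t `]0, 1]%classic = 1%E),
      (forall s A, 0 < s -> measurable A -> G s s A = \d_(1:R) A) &
      (forall s t u (h : R -> R), 0 < s <= t -> t <= u ->
         measurable_fun [set: R] h -> (exists M : R, forall r, `|h r| <= M) ->
         (\int[G s t]_a \int[G t u]_b (h (a * b))%:E)%E
           = (\int[G s u]_r (h r)%:E)%E)].

(* tilde P(s,t,x,A).  For s = 0 the paper only defines tilde P(0,t,0,.) = P(0,t,0,.);
   we use P(0,t,x,.) (only x = 0 is used in the theorem). *)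
Definition Ptilde (R : realType) (kappa : R)
    (P : R -> R -> R -> probability R R) (G : R -> R -> probability R R)
    (s t x : R) (A : set R) : \bar R :=
  if s == 0 then P 0 t x A
  else (\int[G s t]_r P (r * t)%R t ((t / s) `^ kappa * r `^ kappa * x)%R A)%E.

From HB Require Import structures.
From mathcomp Require Import all_boot all_order all_algebra.
From mathcomp Require Import all_classical all_reals all_analysis.
From mathcomp Require Import measurable_realfun.
Set Implicit Arguments. Unset Strict Implicit. Unset Printing Implicit Defensive.
Import Order.TTheory GRing.Theory Num.Theory.
Local Open Scope classical_set_scope.
Local Open Scope ring_scope.
Import HBNNSimple.

(** Since [G_{s,t}] only depends on [t/s], the time change [(s,t) -> (cs,ct)]
    leaves the mixing distribution unchanged, as well as the space factor
    [(t/s)^kappa].  Since [G_{s,t}] is carried by [(0,1]], every [r] that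
    matters gives times [0 <= rt <= t], at which the self-similarity of [P]
    applies to the integrand. *)

Section ConullIntegral.
Context d (T : measurableType d) (R : realType) (mu : {measure set T -> \bar R}).
Variables (D : set T) (mD : measurable D).
Hypothesis muDC0 : mu (~` D) = 0%E.

Lemma sintegral_proj_conull (h : {nnsfun T >-> R}) :
  sintegral mu (proj_nnsfun h mD) = sintegral mu h.
Proof.
rewrite -!integralT_nnsfun.
rewrite [RHS](@ge0_negligible_integral _ _ _ mu setT (~` D)) //; last 3 first.
- exact: measurableC.
- exact/measurable_EFinP/measurable_funP.
- by move=> x _; rewrite lee_fin.
rewrite setTD setCK [RHS]integral_mkcond; apply: eq_integral => x _.
rewrite /= patchE /mindic indicE; case: ifPn => xD.
- by rewrite mulr1.
- by rewrite mulr0.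
Qed.

(* [f] need not be measurable (the integrand of [Ptilde] is not known to be
   measurable in [r]): both sides are compared through the simple functions
   below [f]. *)
Lemma ge0_integral_conull (f : T -> \bar R) : (forall x, (0 <= f x)%E) ->
  (\int[mu]_x f x = \int[mu]_(x in D) f x)%E.
Proof.
move=> f0; rewrite [RHS]integral_mkcond !ge0_integralTE //; last first.
  by move=> x; rewrite patchE; case: ifP.
apply/eqP; rewrite eq_le; apply/andP; split.
- apply: ge_ereal_sup => _ [h /= hf <-].
  rewrite -sintegral_proj_conull; apply: ereal_sup_ubound.
  exists (proj_nnsfun h mD) => //= x; rewrite patchE /mindic indicE.
  by case: ifPn => xD /=; rewrite ?mulr1 ?mulr0.
- apply: ge_ereal_sup => _ [h /= hf <-]; apply: ereal_sup_ubound.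
  exists h => //= x; apply: (le_trans (hf x)); rewrite patchE.
  by case: ifP.
Qed.

End ConullIntegral.

Lemma ratio_family_scale (R : numFieldType) (U : Type) (F : R -> R -> U)
    (H : R -> U) (c s t : R) :
  (forall s t, 0 < s <= t -> F s t = H (t / s)) -> 0 < c -> 0 < s <= t ->
  F (c * s) (c * t) = F s t.
Proof.
move=> FH c0 /andP[s0 st].
rewrite !FH ?s0 // ?mulr_gt0 ?ler_pM2l //.
by rewrite -mulf_div divff ?gt_eqF ?mul1r.
Qed.

Section PtildeSelfSimilar.
Variables (R : realType) (kappa : R).
Variables (P : R -> R -> R -> probability R R) (G : R -> R -> probability R R).
Hypothesis ssP : ss_transition kappa P.

Lemma Ptilde_scale_origin c t x A : 0 < c -> 0 <= t -> measurable A ->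
  Ptilde kappa P G (c * 0) (c * t) (c `^ kappa * x) (scale_set (c `^ kappa) A)
  = Ptilde kappa P G 0 t x A.
Proof.
move=> c0 t0 mA; rewrite /Ptilde mulr0 eqxx.
by rewrite -[in LHS](mulr0 c) ssP // lexx.
Qed.

Lemma Ptilde_integrand_scale c s t x r A :
  0 < c -> 0 <= t -> 0 <= r <= 1 -> measurable A ->
  P (r * (c * t)) (c * t) ((c * t / (c * s)) `^ kappa * r `^ kappa * (c `^ kappa * x))
    (scale_set (c `^ kappa) A)
  = P (r * t) t ((t / s) `^ kappa * r `^ kappa * x) A.
Proof.
move=> c0 t0 /andP[r0 r1] mA.
have rt : 0 <= r * t <= t by rewrite mulr_ge0 //= ler_piMl.
rewrite -(@ssP c (r * t) t _ A c0 rt mA) -mulf_div divff ?gt_eqF // mul1r.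
by congr (P _ _ _ _); rewrite mulrCA.
Qed.

Lemma Ptilde_scale_pos c s t x A : 0 < c -> 0 < s <= t -> measurable A ->
  G s t `]0, 1]%classic = 1%E -> G (c * s) (c * t) = G s t ->
  Ptilde kappa P G (c * s) (c * t) (c `^ kappa * x) (scale_set (c `^ kappa) A)
  = Ptilde kappa P G s t x A.
Proof.
move=> c0 /andP[s0 st] mA G1 Gc.
have t0 : 0 <= t by rewrite ltW // (lt_le_trans s0).
have GC0 : G s t (~` `]0, 1]) = 0%E by rewrite probability_setC // G1 subee.
rewrite /Ptilde !mulf_eq0 !gt_eqF //= Gc.
have mI : measurable (`]0, 1] : set R) by [].
rewrite !(ge0_integral_conull mI GC0) //.
apply: eq_integral => r; rewrite inE /= in_itv /= => /andP[r0 r1].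
by rewrite Ptilde_integrand_scale // ltW.
Qed.

End PtildeSelfSimilar.

Theorem proposition2p3 (R : realType) (kappa : R)
    (P : R -> R -> R -> probability R R) (G : R -> R -> probability R R) :
  0 < kappa ->
  transition_function P ->
  ss_transition kappa P ->
  G_family G ->
  (exists H : R -> probability R R, forall s t, 0 < s <= t -> G s t = H (t / s)) ->
  forall (c s t x : R) (A : set R), 0 < c -> 0 <= s <= t -> (s = 0 -> x = 0) ->
    measurable A ->
    Ptilde kappa P G (c * s) (c * t) (c `^ kappa * x) (scale_set (c `^ kappa) A)
    = Ptilde kappa P G s t x A.
Proof.
move=> _ _ ssP [G1 _ _] [H GH] c s t x A c0 /andP[s0 st] _ mA.
have [s00|sn0] := eqVneq s 0.
  by rewrite s00 in st *; exact: Ptilde_scale_origin ssP _ _ _ _ c0 st mA.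
have sst : 0 < s <= t by rewrite lt_neqAle eq_sym sn0 s0.
apply: Ptilde_scale_pos => //; first exact: G1.
exact: ratio_family_scale GH c0 sst.
Qed.
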